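(* Assume the Gaussian setting (G) described in the context. There exists a positive constant $K$ such that $$\mathbb{P}\Big(\forall\lambda,\lambda'\in[\lambda_{\min},\lambda_{\max}]:\ \mathcal{C}_{\lambda'}(\hat w_R(\lambda))\le\mathcal{C}_{\lambda'}(\hat w_R(\lambda'))+K|\lambda-\lambda'|\Big)=1-o(1).$$
   Context: Asymptotic regime: sequence indexed by $n$, $p=p(n)$, $p/n\to\delta\in(0,\infty)$. Data $y=X\beta+\sigma z$, deterministic $\beta$; $K$ depends only on $\delta,\sigma_{\max},\lambda_{\min},\lambda_{\max}$. Gaussian setting (G): $X_{ij}$ i.i.d. $\mathcal{N}(0,1)$; $z_i$ i.i.d. $\mathcal{N}(0,1)$ independent of $X$, $\sigma^2\le\sigma_{\max}^2$; $\|\beta\|_2^2\to\sigma_\beta^2\le\sigma_{\max}^2<\infty$; $0<\lambda_{\min}\le\lambda_{\max}<\infty$. $\mathcal{C}_\lambda(w)=\frac{1}{2n}\|Xw-\sigma z\|_2^2+\frac{\lambda}{2}\|w+\beta\|_2^2$, and $\hat w_R(\lambda)=\hat\beta_R(\lambda)-\beta$, where $\hat\beta_R(\lambda)=\arg\min_b\frac1{2n}\|y-Xb\|_2^2+\frac{\lambda}{2}\|b\|_2^2$ (so $\hat w_R(\lambda)$ minimizes $\mathcal{C}_\lambda$). *)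

From HB Require Import structures.
From mathcomp Require Import all_boot all_order all_algebra.
From mathcomp Require Import all_classical all_reals all_analysis.
Set Implicit Arguments. Unset Strict Implicit. Unset Printing Implicit Defensive.
Import Order.TTheory GRing.Theory Num.Theory.
Import numFieldNormedType.Exports.
Local Open Scope classical_set_scope.
Local Open Scope ring_scope.

(* Mutual independence of a finite family of real random variables:
   product rule for every family of measurable sets (taking B k = setT
   for unused indices covers every subfamily). *)
Definition mutually_independent {d} {T : measurableType d} {R : realType}
  (P : probability T R) (I : finType) (Y : I -> T -> R) : Prop :=
  forall B : I -> set R, (forall k, measurable (B k)) ->
    P (\bigcap_(k in [set: I]) (Y k @^-1` B k)) =
    (\prod_(k : I) P (Y k @^-1` B k))%E.

Definition std_gaussian_rv {d} {T : measurableType d} {R : realType}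
  (P : probability T R) (Y : T -> R) : Prop :=
  measurable_fun setT Y /\
  forall B : set R, measurable B -> P (Y @^-1` B) = normal_prob 0 1 B.

Definition sqnorm {R : realType} {m : nat} (v : 'cV[R]_m) : R :=
  \sum_(i < m) (v i 0) ^+ 2.

Definition ridge_obj {R : realType} {n p : nat} (X : 'M[R]_(n, p))
  (y : 'cV[R]_n) (lam : R) (b : 'cV[R]_p) : R :=
  (2 * n%:R)^-1 * sqnorm (y - X *m b) + lam / 2 * sqnorm b.

Definition is_ridge_estimate {R : realType} {n p : nat} (X : 'M[R]_(n, p))
  (y : 'cV[R]_n) (lam : R) (b : 'cV[R]_p) : Prop :=
  forall b', ridge_obj X y lam b <= ridge_obj X y lam b'.

Definition cost_C {R : realType} {n p : nat} (X : 'M[R]_(n, p))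
  (z : 'cV[R]_n) (beta : 'cV[R]_p) (sigma lam : R) (w : 'cV[R]_p) : R :=
  (2 * n%:R)^-1 * sqnorm (X *m w - sigma *: z) + lam / 2 * sqnorm (w + beta).

(* the event of the lemma at sample size n, for data (X, z):
   for all lam, lam' in [lmin, lmax], with w_R(lam) = bhat(lam) - beta
   (bhat(lam) the ridge estimate, for y = X beta + sigma z),
   C_lam'(w_R(lam)) <= C_lam'(w_R(lam')) + K |lam - lam'|. *)
Definition lemma11_event {R : realType} {n p : nat} (X : 'M[R]_(n, p))
  (z : 'cV[R]_n) (beta : 'cV[R]_p) (sigma lmin lmax K : R) : Prop :=
  let y := X *m beta + sigma *: z in
  forall lam lam' : R,
    lmin <= lam <= lmax -> lmin <= lam' <= lmax ->
    forall bh bh' : 'cV[R]_p,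
      is_ridge_estimate X y lam bh -> is_ridge_estimate X y lam' bh' ->
      cost_C X z beta sigma lam' (bh - beta)
        <= cost_C X z beta sigma lam' (bh' - beta) + K * `|lam - lam'|.

From mathcomp Require Import all_boot all_order all_algebra.
From mathcomp Require Import all_classical all_reals all_analysis.
From mathcomp Require Import measurable_realfun ring lra.
Import Order.TTheory GRing.Theory Num.Theory.
Import numFieldNormedType.Exports.
Local Open Scope classical_set_scope.
Local Open Scope ring_scope.

(* Since [cost_C (b - beta)] is the ridge objective at [b] and the objectives at
   two penalties differ by [(lam' - lam) / 2 * ||b||^2], optimality of the ridge
   estimate at [lam] gives the claim as soon as [K] bounds the squared norms of
   all ridge estimates.  Comparing an estimate with [beta] bounds its squared
   norm by [||beta||^2 + sigma^2 ||z||^2 / (n lam)], so it remains to show that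
   [||z||^2 <= B n] with probability [1 - O(1/n)].  When every [z_i^2 <= n],
   [z_i^2] is at most the number of integers [k < n] below it, which turns
   [||z||^2] into a count of events [z_i^2 > k]; Chebyshev's inequality for that
   count, with covariances controlled by pairwise independence and the Gaussian
   tail [P (z^2 > s) <= c e^(-s/4)], together with a union bound for the event
   that some [z_i^2 > n], concludes. *)

Section SquaredNorm.
Context {R : realType} {m : nat}.
Implicit Type v : 'cV[R]_m.

Lemma sqnorm_ge0 v : 0 <= sqnorm v.
Proof. by apply: sumr_ge0 => i _; exact: sqr_ge0. Qed.

Lemma sqnormN v : sqnorm (- v) = sqnorm v.
Proof. by apply: eq_bigr => i _; rewrite mxE sqrrN. Qed.

Lemma sqnormZ (a : R) v : sqnorm (a *: v) = a ^+ 2 * sqnorm v.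
Proof. by rewrite /sqnorm mulr_sumr; apply: eq_bigr => i _; rewrite mxE exprMn. Qed.

End SquaredNorm.

Section RidgeRegression.
Context {R : realType} {n p : nat} {X : 'M[R]_(n, p)} {y : 'cV[R]_n}.

Lemma ridge_objD (lam lam' : R) b :
  ridge_obj X y lam' b = ridge_obj X y lam b + (lam' - lam) / 2 * sqnorm b.
Proof. by rewrite /ridge_obj; ring. Qed.

Lemma ridge_estimate_sqnorm_le (lam : R) b b0 : 0 < lam ->
  is_ridge_estimate X y lam b ->
  sqnorm b <= sqnorm b0 + sqnorm (y - X *m b0) / n%:R / lam.
Proof.
move=> lam_gt0 /(_ b0); rewrite /ridge_obj invfM.
have fit_ge0 : 0 <= n%:R^-1 * sqnorm (y - X *m b) by rewrite mulr_ge0 ?sqnorm_ge0.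
have -> : 2^-1 * n%:R^-1 * sqnorm (y - X *m b0) = sqnorm (y - X *m b0) / n%:R / 2 by ring.
move=> opt; rewrite -lerBlDl ler_pdivlMr //.
move: opt fit_ge0; set e := sqnorm (y - X *m b0) / n%:R.
set f := n%:R^-1 * _; rewrite -[2^-1 / _ * _]mulrA -/f; nra.
Qed.

Lemma ridge_estimate_obj_le (lam lam' K : R) b b' :
  is_ridge_estimate X y lam b -> sqnorm b <= K -> sqnorm b' <= K ->
  ridge_obj X y lam' b <= ridge_obj X y lam' b' + K * `|lam - lam'|.
Proof.
move=> /(_ b') opt_b b_le b'_le.
rewrite (ridge_objD lam) [ridge_obj _ _ lam' b'](ridge_objD lam).
have b_ge0 := sqnorm_ge0 b; have b'_ge0 := sqnorm_ge0 b'.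
have [le_lam|lt_lam] := lerP lam lam'.
  have : (lam' - lam) * sqnorm b <= (lam' - lam) * K by rewrite ler_wpM2l ?subr_ge0.
  nra.
have : (lam - lam') * sqnorm b' <= (lam - lam') * K by rewrite ler_wpM2l // subr_ge0 ltW.
nra.
Qed.

End RidgeRegression.

Lemma cost_C_ridge_obj (R : realType) (n p : nat) (X : 'M[R]_(n, p)) z beta
    (sigma lam : R) (b : 'cV[R]_p) :
  cost_C X z beta sigma lam (b - beta) = ridge_obj X (X *m beta + sigma *: z) lam b.
Proof.
rewrite /cost_C /ridge_obj subrK -sqnormN; congr (_ * sqnorm _ + _).
by rewrite mulmxBr !opprB addrA [_ *: z + _]addrC.
Qed.

Lemma lemma11_event_of_sqnorm_le (R : realType) (n p : nat) (X : 'M[R]_(n, p))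
    (z : 'cV[R]_n) (beta : 'cV[R]_p) (sigma lmin lmax s B : R) :
  0 < lmin -> 0 <= B -> sqnorm beta <= s + 1 -> sigma ^+ 2 <= s -> sqnorm z <= B * n%:R ->
  lemma11_event X z beta sigma lmin lmax (s + 1 + s * B / lmin).
Proof.
move=> lmin_gt0 B_ge0 beta_le sigma_le z_le y lam lam' /andP[lam_ge _] /andP[lam'_ge _]
  b b' opt_b opt_b'.
rewrite !cost_C_ridge_obj -/y.
have res_beta : y - X *m beta = sigma *: z by rewrite /y addrAC subrr add0r.
have sqnorm_le lm bh : lmin <= lm -> is_ridge_estimate X y lm bh ->
    sqnorm bh <= s + 1 + s * B / lmin.
  move=> lm_ge /(ridge_estimate_sqnorm_le lm bh beta (lt_le_trans lmin_gt0 lm_ge)).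
  move/le_trans; apply; rewrite res_beta sqnormZ lerD //.
  have lm_gt0 := lt_le_trans lmin_gt0 lm_ge.
  apply: ler_pM; last by rewrite lef_pV2 ?posrE.
  - by rewrite mulr_ge0 ?invr_ge0 // mulr_ge0 ?sqr_ge0 // sqnorm_ge0.
  - by rewrite invr_ge0 ltW.
  rewrite -mulrA; apply: ler_pM; rewrite ?sqr_ge0 ?mulr_ge0 ?sqnorm_ge0 ?invr_ge0 //.
  have [n0|n_gt0] := eqVneq (n%:R : R) 0; first by rewrite n0 invr0 mulr0.
  by rewrite ler_pdivrMr // lt0r n_gt0 /=.
exact: ridge_estimate_obj_le opt_b (sqnorm_le _ _ lam_ge opt_b) (sqnorm_le _ _ lam'_ge opt_b').
Qed.

Lemma measurable_sqr_gt {R : realType} (s : R) : measurable [set x : R | s < x ^+ 2].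
Proof.
rewrite (_ : [set x | s < x ^+ 2] = (fun x : R => x ^+ 2) @^-1` `]s, +oo[).
  by rewrite -[X in measurable X]setTI; exact: measurable_funX.
by apply/seteqP; split => x /=; rewrite in_itv /= andbT.
Qed.

(* The standard density is dominated by a multiple of the N(0, 2) density
   on [s < x^2], since their ratio is proportional to expR (- x^2 / 4). *)
Lemma normal_pdf_le_sqr_gt (R : realType) (s x : R) : s < x ^+ 2 ->
  normal_pdf 0 1 x <=
    normal_peak 1 / normal_peak (Num.sqrt 2) * expR (- s / 4) * normal_pdf 0 (Num.sqrt 2) x.
Proof.
move=> s_lt; have sqrt2_neq0 : Num.sqrt (2 : R) != 0 by rewrite sqrtr_eq0 -ltNge.
rewrite !normal_pdfE ?oner_neq0 //= /normal_fun !subr0 expr1n sqr_sqrtr //.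
rewrite -!mulrA ler_pM2l ?normal_peak_gt0 ?oner_neq0 //.
rewrite mulrCA mulKf ?gt_eqF ?normal_peak_gt0 // -expRD ler_expR.
rewrite (_ : (2 : R) *+ 2 = 4); [lra | by rewrite mulr2n; lra].
Qed.

Lemma normal_prob_sqr_gt_le (R : realType) : exists2 c : R, 0 < c &
  forall s : R, (normal_prob 0 1 [set x | (s < x ^+ 2)%R] <= (c * expR (- s / 4))%:E)%E.
Proof.
set sqrt2 : R := Num.sqrt 2.
have sqrt2_neq0 : sqrt2 != 0 by rewrite sqrtr_eq0 -ltNge.
have c_gt0 : 0 < normal_peak 1 / normal_peak sqrt2.
  by rewrite divr_gt0 ?normal_peak_gt0 ?oner_neq0.
exists (normal_peak 1 / normal_peak sqrt2) => // s.
have mpdf (sg : R) : measurable_fun setT (EFin \o normal_pdf 0 sg).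
  by apply/measurable_EFinP; exact: measurable_normal_pdf.
have pdf_ge0 (sg : R) x : (0 <= (normal_pdf 0 sg x)%:E)%E by rewrite lee_fin normal_pdf_ge0.
set c := _ * expR (- s / 4).
have c_ge0 : 0 <= c by rewrite mulr_ge0 ?expR_ge0 ?ltW.
rewrite /normal_prob; apply: (@le_trans _ _
  (\int[lebesgue_measure]_(x in [set x | (s < x ^+ 2)%R]) (c%:E * (normal_pdf 0 sqrt2 x)%:E))%E).
  apply: ge0_le_integral => //; first exact: measurable_sqr_gt.
  - exact: measurable_funS (mpdf 1).
  - by apply: emeasurable_funM => //; exact: measurable_funS (mpdf _).
  - by move=> x /normal_pdf_le_sqr_gt; rewrite -EFinM lee_fin.
rewrite ge0_integralZl //; [|exact: measurable_sqr_gt|exact: measurable_funS (mpdf _)].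
rewrite -[leRHS]mule1 lee_wpmul2l ?lee_fin // -(integral_normal_pdf 0 sqrt2).
by apply: ge0_subset_integral => //; [exact: measurable_sqr_gt | exact: mpdf].
Qed.

Lemma measure_bigsetU_le {d} {T : measurableType d} {R : realType}
    (mu : {measure set T -> \bar R}) {I : Type} (s : seq I) (B : I -> set T) :
  (forall i, measurable (B i)) ->
  (mu (\big[setU/set0]_(i <- s) B i) <= \sum_(i <- s) mu (B i))%E.
Proof.
move=> mB; elim: s => [|i s IH]; first by rewrite !big_nil measure0.
rewrite !big_cons; apply: le_trans (measureU2 _ _ _) _ => //.
  exact: bigsetU_measurable.
exact: leeD.
Qed.

Lemma probability_setCU_ge {d} {T : measurableType d} {R : realType}
    (P : probability T R) (M D G : set T) :
  measurable M -> measurable D -> measurable G -> ~` (M `|` D) `<=` G ->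
  1 - fine (P M) - fine (P D) <= fine (P G).
Proof.
move=> mM mD mG MDG; have mMD := measurableU _ _ mM mD.
have PMD : fine (P (M `|` D)) <= fine (P M) + fine (P D).
  by rewrite -lee_fin EFinD !fineK ?fin_num_measure //; exact: measureU2.
have : fine (P (~` (M `|` D))) <= fine (P G).
  by rewrite fine_le ?fin_num_measure ?le_measure ?inE //; exact: measurableC.
rewrite probability_setC // fineB ?fin_num_measure //= ; lra.
Qed.

Lemma chebyshev_integral {d} {T : measurableType d} {R : realType}
    (mu : {measure set T -> \bar R}) (f : T -> R) (eps : R) :
  measurable_fun setT f -> 0 < eps ->
  ((eps ^+ 2)%:E * mu [set t | (eps <= `|f t|)%R] <= \int[mu]_t ((f t) ^+ 2)%:E)%E.
Proof.
move=> mf eps_gt0; set sqr := er_map (fun x : R => x ^+ 2).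
have msqr : measurable_fun setT sqr by exact: (measurable_er_map T (exprn_measurable 2)).
have sqr_ge0 : forall x, (0 <= x -> 0 <= sqr x)%E.
  by case => //= r _; rewrite lee_fin sqr_ge0.
have sqr_nd : {in `[0, +oo[%classic &, {homo sqr : x y / x <= y}}%E.
  move=> [x| |] [y| |]; rewrite !inE /= !in_itv /= ?andbT ?lee_fin ?leey //.
  by move=> x_ge0 y_ge0 xy; rewrite ler_sqr.
have mEf : measurable_fun setT (EFin \o f) by exact/measurable_EFinP.
have := le_integral_comp_abse mu measurableT msqr sqr_ge0 sqr_nd mEf eps_gt0.
rewrite setTI /= => /le_trans; apply.
rewrite le_eqVlt; apply/orP; left; apply/eqP/eq_integral => x _.
by rewrite real_normK ?num_real.
Qed.

Section IndicatorCount.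
Context {d} {T : measurableType d} {R : realType} (P : probability T R).
Context {I : finType} {A : I -> set T}.
Hypothesis mA : forall a, measurable (A a).

Local Notation count t := (\sum_a (\1_(A a) t : R)).
Local Notation mean := (\sum_a fine (P (A a))).
Local Notation pair_sum := (\sum_a \sum_b fine (P (A a `&` A b))).

Let measurable_count : measurable_fun setT (fun t => count t).
Proof. by apply: measurable_sum => a; exact: measurable_indic. Qed.

Let measurable_indicE (B : set T) : measurable B ->
  measurable_fun setT (fun t => (\1_B t : R)%:E).
Proof. by move=> mB; apply/measurable_EFinP; exact: measurable_indic. Qed.

Lemma integral_count : (\int[P]_t (count t)%:E = mean%:E)%E.
Proof.
under eq_integral do rewrite -sumEFin.
rewrite ge0_integral_sum //; last by move=> a; exact: measurable_indicE.
rewrite -sumEFin; apply: eq_bigr => a _.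
by rewrite integral_indic // setIT fineK // fin_num_measure.
Qed.

Lemma integral_count_sqr : (\int[P]_t ((count t) ^+ 2)%:E = pair_sum%:E)%E.
Proof.
have mAA a b : measurable (A a `&` A b) by exact: measurableI.
have count_sqrE t : ((count t) ^+ 2)%:E = (\sum_a \sum_b (\1_(A a `&` A b) t : R)%:E)%E.
  rewrite expr2 mulr_suml -sumEFin; apply: eq_bigr => a _.
  rewrite mulr_sumr -sumEFin; apply: eq_bigr => b _.
  by rewrite indicI.
under eq_integral do rewrite count_sqrE.
rewrite ge0_integral_sum //; last first.
- by move=> a t _; exact: sume_ge0.
- by move=> a; apply: emeasurable_sum => b; exact: measurable_indicE.
rewrite -sumEFin; apply: eq_bigr => a _.
rewrite ge0_integral_sum //; last by move=> b; exact: measurable_indicE.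
rewrite -sumEFin; apply: eq_bigr => b _.
by rewrite integral_indic // setIT fineK // fin_num_measure.
Qed.

(* The variance of the count: both sides of
   (count - mean)^2 + 2 mean count = count^2 + mean^2 are nonnegative,
   so they can be integrated without integrability side conditions. *)
Lemma integral_count_dev :
  (\int[P]_t ((count t - mean) ^+ 2)%:E = (pair_sum - mean ^+ 2)%:E)%E.
Proof.
have mean_ge0 : 0 <= mean by apply: sumr_ge0 => a _; rewrite fine_ge0.
have count_ge0 t : 0 <= count t by apply: sumr_ge0 => a _; rewrite indicE ler0n.
have mdev : measurable_fun setT (fun t => ((count t - mean) ^+ 2)%:E).
  by apply/measurable_EFinP; apply: measurable_funX; exact: measurable_funB.
have mlin : measurable_fun setT (fun t => ((2 * mean) * count t)%:E).
  by apply/measurable_EFinP; exact: measurable_funM.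
have msqr : measurable_fun setT (fun t => ((count t) ^+ 2)%:E).
  by apply/measurable_EFinP; exact: measurable_funX.
have E : (\int[P]_t (((count t - mean) ^+ 2)%:E + ((2 * mean) * count t)%:E) =
          \int[P]_t (((count t) ^+ 2)%:E + (mean ^+ 2)%:E))%E.
  by apply: eq_integral => t _; rewrite -!EFinD; congr EFin; ring.
rewrite !ge0_integralD //= in E; try by move=> t _; rewrite lee_fin ?sqr_ge0 ?mulr_ge0.
have int_lin : (\int[P]_t ((2 * mean) * count t)%:E = (2 * mean * mean)%:E)%E.
  under eq_integral do rewrite EFinM.
  rewrite ge0_integralZl_EFin ?integral_count ?mulr_ge0 //.
  - by move=> t _; rewrite lee_fin.
  - exact/measurable_EFinP.
move: E; rewrite int_lin integral_count_sqr integral_cst //.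
rewrite [X in (_ * X)%E](_ : _ = 1%E) ?mule1; last exact: probability_setT.
move/(congr1 (fun x => x - (2 * mean * mean)%:E)%E); rewrite addeK // -!EFinD => ->.
by congr EFin; ring.
Qed.

Let measurable_dev : measurable_fun setT (fun t => count t - mean).
Proof. exact: measurable_funB. Qed.

Lemma measurable_count_dev (eps : R) : measurable [set t | eps <= `|count t - mean|].
Proof.
rewrite -[X in measurable X]setTI; apply: measurable_fun_le => //.
exact: measurableT_comp.
Qed.

Lemma count_deviation_le (eps : R) : 0 < eps ->
  fine (P [set t | eps <= `|count t - mean|]) <= (pair_sum - mean ^+ 2) / eps ^+ 2.
Proof.
move=> eps_gt0; have := chebyshev_integral P _ _ measurable_dev eps_gt0.
have mD := measurable_count_dev eps.
rewrite integral_count_dev -[X in (_ * X)%E](fineK (fin_num_measure P _ mD)).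
rewrite -EFinM lee_fin.
by rewrite ler_pdivlMr ?exprn_gt0 // mulrC.
Qed.

End IndicatorCount.

Lemma mutually_independent_pair {d} {T : measurableType d} {R : realType}
    (P : probability T R) (I : finType) (Y : I -> T -> R) (i j : I) (B C : set R) :
  mutually_independent P Y -> i != j -> measurable B -> measurable C ->
  P (Y i @^-1` B `&` Y j @^-1` C) = (P (Y i @^-1` B) * P (Y j @^-1` C))%E.
Proof.
move=> indep ij mB mC; have ji : j != i by rewrite eq_sym.
pose BC k := if k == i then B else if k == j then C else setT.
have mBC k : measurable (BC k) by rewrite /BC; case: ifP => _ //; case: ifP.
have := indep BC mBC.
have -> : \bigcap_(k in [set: I]) (Y k @^-1` BC k) = Y i @^-1` B `&` Y j @^-1` C.
  apply/seteqP; split => t /=.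
    move=> H; split; [have := H i Logic.I | have := H j Logic.I];
    by rewrite /BC ?eqxx ?(negbTE ji).
  move=> [Bi Cj] k _; rewrite /BC; case: ifP => [/eqP -> //|_].
  by case: ifP => [/eqP -> //|_].
move=> ->; rewrite (bigD1 i) //= (bigD1 j) //= big1 ?mule1.
  by rewrite /BC eqxx (negbTE ji) eqxx.
move=> k /andP[ki kj]; rewrite /BC (negbTE ki) (negbTE kj) preimage_setT.
exact: probability_setT.
Qed.

Lemma mutually_independent_inr {d} {T : measurableType d} {R : realType}
    (P : probability T R) (I J : finType) (Y : I + J -> T -> R) :
  mutually_independent P Y -> forall j j', j != j' -> forall B C : set R,
  measurable B -> measurable C ->
  P (Y (inr j) @^-1` B `&` Y (inr j') @^-1` C) =
    (P (Y (inr j) @^-1` B) * P (Y (inr j') @^-1` C))%E.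
Proof.
by move=> indep j j' jj' B C; apply: mutually_independent_pair.
Qed.

Lemma measurable_sum_sqr_le {d} {T : measurableType d} {R : realType} {n : nat}
    (z : 'I_n -> T -> R) (a : R) :
  (forall i, measurable_fun setT (z i)) -> measurable [set t | \sum_i z i t ^+ 2 <= a].
Proof.
move=> mz; rewrite -[X in measurable X]setTI; apply: measurable_fun_le => //.
by apply: measurable_sum => i; exact: measurable_funX.
Qed.

Lemma le_sum_lt_nat (R : realFieldType) (x : R) (L : nat) : 0 <= x -> x <= L%:R ->
  x <= \sum_(k < L) ((k%:R < x)%R : bool)%:R.
Proof.
move=> x_ge0.
suff : (x <= L%:R -> x <= \sum_(k < L) ((k%:R < x)%R : bool)%:R) /\
       (L%:R <= x -> L%:R <= \sum_(k < L) ((k%:R < x)%R : bool)%:R :> R) by case.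
elim: L => [|L [IH1 IH2]]; first by rewrite big_ord0.
rewrite big_ord_recr /= -natr1.
have sum_ge0 : 0 <= \sum_(k < L) ((k%:R < x)%R : bool)%:R :> R by apply: sumr_ge0 => k _.
split => [xL|Lx].
  have [xl|lx] := lerP x L%:R; first by rewrite (le_trans (IH1 xl)) // lerDl.
  by rewrite (le_trans xL) // lerD2r IH2 // ltW.
have lx : L%:R < x by rewrite (lt_le_trans _ Lx) // ltrDl.
by rewrite lx lerD2r IH2 // ltW.
Qed.

Lemma sqr_mul_expR_le {R : realType} (x : R) : 0 <= x -> x ^+ 2 * expR (- x / 4) <= 64.
Proof.
move=> x_ge0; have := expR_ge1Dx (x / 8); have := expR_gt0 (- x / 4).
set e := expR (- x / 4); set f := expR (x / 8) => e_gt0 f_ge.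
have ef : e * (f * f) = 1 by rewrite -!expRD -expR0; congr expR; lra.
have : x / 8 * (x / 8) <= f * f by apply: ler_pM; lra.
move/(ler_wpM2r (ltW e_gt0)); rewrite expr2; lra.
Qed.

Section SumOfSquares.
Context {d} {T : measurableType d} {R : realType} (P : probability T R).
Context (n : nat) (z : 'I_n -> T -> R) (c : R).
Hypothesis mz : forall i, measurable_fun setT (z i).
Hypothesis c_gt0 : 0 < c.
Hypothesis tail : forall i (s : R),
  fine (P (z i @^-1` [set x | s < x ^+ 2])) <= c * expR (- s / 4).
Hypothesis indep : forall i j, i != j -> forall B C : set R, measurable B -> measurable C ->
  P (z i @^-1` B `&` z j @^-1` C) = (P (z i @^-1` B) * P (z j @^-1` C))%E.

(* [rho ^+ k] dominates the tail [expR (- k / 4)], with room to spare: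
   [rho ^+ k * rho ^+ l] still dominates [expR (- maxn k l / 4)]. *)
Local Notation rho := (expR (- 1 / 8) : R).
Local Notation exceed a := (z a.1 @^-1` [set x | (a.2%:R < x ^+ 2)%R]).

Let measurable_exceed i (s : R) : measurable (z i @^-1` [set x | s < x ^+ 2]).
Proof. by rewrite -[_ @^-1` _]setTI; exact: (mz i measurableT _ (measurable_sqr_gt s)). Qed.

Let fine_measure_le {B C : set T} : measurable B -> measurable C -> B `<=` C ->
  fine (P B) <= fine (P C).
Proof.
move=> mB mC BC; rewrite fine_le ?fin_num_measure //.
by apply: le_measure => //; rewrite inE.
Qed.

Let expR_rho (k : nat) : expR (- k%:R / 8) = rho ^+ k.
Proof. by rewrite -expRM_natl; congr expR; lra. Qed.

Let rho_gt0 : 0 < rho. Proof. exact: expR_gt0. Qed.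

Let sum_rho_le : \sum_(k < n) rho ^+ k <= (1 - rho)^-1.
Proof.
have rho_lt1 : `|rho| < 1 by rewrite gtr0_norm // expR_lt1; lra.
have -> : \sum_(k < n) rho ^+ k = series (geometric 1 rho) n.
  by rewrite seriesEnat /= big_mkord; apply: eq_bigr => k _; rewrite /= mul1r.
by rewrite -[(1 - rho)^-1]mul1r geometric_le_lim.
Qed.

Let sum_pair (F : 'I_n * 'I_n -> R) : \sum_a F a = \sum_i \sum_k F (i, k).
Proof. by rewrite pair_big; apply: eq_bigr => -[]. Qed.

Let sum_pair_rho : \sum_(a : 'I_n * 'I_n) rho ^+ a.2 = n%:R * \sum_(k < n) rho ^+ k.
Proof.
rewrite sum_pair (eq_bigr (fun=> \sum_(k < n) rho ^+ k)) => [|i _]; last exact: eq_bigr.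
by rewrite sumr_const card_ord mulr_natl.
Qed.

Lemma exceed_le (a : 'I_n * 'I_n) : fine (P (exceed a)) <= c * rho ^+ a.2.
Proof.
apply: le_trans (tail _ _) _; rewrite -expR_rho ler_pM2l // ler_expR.
by have := ler0n R a.2; lra.
Qed.

(* On a common coordinate the events are nested, which is where the extra
   term comes from; on distinct coordinates they are independent. *)
Lemma exceed_pair_le (a b : 'I_n * 'I_n) :
  fine (P (exceed a `&` exceed b)) <=
    fine (P (exceed a)) * fine (P (exceed b)) +
    (if b.1 == a.1 then c * rho ^+ a.2 * rho ^+ b.2 else 0).
Proof.
have [e|ne] := eqVneq b.1 a.1; last first.
  rewrite addr0 indep 1?eq_sym //; try exact: measurable_sqr_gt.
  by rewrite fineM ?fin_num_measure.
rewrite -[X in X <= _]add0r lerD ?mulr_ge0 ?fine_ge0 //.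
wlog le_ab : a b e / (a.2 <= b.2)%N.
  move=> wlog_le; have [|/ltnW] := leqP a.2 b.2; first exact: wlog_le.
  by rewrite setIC mulrAC; apply: wlog_le.
apply: le_trans (fine_measure_le _ _ (@subIsetr _ _ _)) _ => //; first exact: measurableI.
apply: le_trans (tail _ _) _.
rewrite -mulrA -!expR_rho -expRD ler_pM2l // ler_expR.
have : a.2%:R <= b.2%:R :> R by rewrite ler_nat.
lra.
Qed.

Lemma mean_exceed_le :
  \sum_(a : 'I_n * 'I_n) fine (P (exceed a)) <= n%:R * (c * (1 - rho)^-1).
Proof.
rewrite sum_pair; apply: le_trans (_ : _ <= \sum_(i < n) \sum_(k < n) c * rho ^+ k) _.
  by apply: ler_sum => i _; apply: ler_sum => k _; exact: (exceed_le (i, k)).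
under eq_bigr do rewrite -mulr_sumr.
by rewrite sumr_const card_ord -[_ *+ n]mulr_natl ler_wpM2l // ler_pM2l.
Qed.

Lemma pair_sum_exceed_le :
  \sum_(a : 'I_n * 'I_n) \sum_(b : 'I_n * 'I_n) fine (P (exceed a `&` exceed b)) -
    (\sum_(a : 'I_n * 'I_n) fine (P (exceed a))) ^+ 2 <= n%:R * (c * (1 - rho)^-1 ^+ 2).
Proof.
set G := \sum_(k < n) rho ^+ k.
have G_ge0 : 0 <= G by apply: sumr_ge0 => k _; rewrite exprn_ge0 // ltW.
have -> : (\sum_(a : 'I_n * 'I_n) fine (P (exceed a))) ^+ 2 =
    \sum_(a : 'I_n * 'I_n) \sum_(b : 'I_n * 'I_n) fine (P (exceed a)) * fine (P (exceed b)).
  by rewrite expr2 mulr_suml; apply: eq_bigr => a _; rewrite mulr_sumr.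
rewrite -sumrB; under eq_bigr do rewrite -sumrB.
apply: le_trans (_ : _ <= \sum_(a : 'I_n * 'I_n) \sum_(b : 'I_n * 'I_n)
    (if b.1 == a.1 then c * rho ^+ a.2 * rho ^+ b.2 else 0)) _.
  apply: ler_sum => a _; apply: ler_sum => b _; rewrite lerBlDl.
  exact: exceed_pair_le.
have inner (a : 'I_n * 'I_n) :
    \sum_(b : 'I_n * 'I_n) (if b.1 == a.1 then c * rho ^+ a.2 * rho ^+ b.2 else 0) =
    c * rho ^+ a.2 * G.
  rewrite sum_pair (bigD1 a.1) //= [X in _ + X]big1 ?addr0 => [|j ja]; last first.
    by apply: big1 => l _; rewrite (negbTE ja).
  by rewrite /G mulr_sumr; apply: eq_bigr => k _; rewrite eqxx.
under eq_bigr do rewrite inner.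
rewrite -mulr_suml -mulr_sumr sum_pair_rho mulrCA -mulrA ler_wpM2l //.
by rewrite -mulrA ler_pM2l // expr2 ler_pM.
Qed.

Lemma prob_some_sqr_gt_le :
  fine (P (\big[setU/set0]_i z i @^-1` [set x | n%:R < x ^+ 2])) <= 64 * c / n%:R.
Proof.
have mU : measurable (\big[setU/set0]_i z i @^-1` [set x | n%:R < x ^+ 2]).
  exact: bigsetU_measurable.
apply: le_trans (_ : _ <= \sum_(i < n) c * expR (- n%:R / 4)) _.
  rewrite -lee_fin fineK ?fin_num_measure // -sumEFin.
  apply: le_trans (measure_bigsetU_le P _ _ (fun i => measurable_exceed i _)) _.
  by apply: lee_sum => i _; rewrite -[leLHS]fineK ?fin_num_measure // lee_fin tail.
rewrite sumr_const card_ord -[c * _ *+ n]mulr_natl.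
have [->|n_gt0] := posnP n; first by rewrite !mul0r invr0 mulr0.
rewrite ler_pdivlMr ?ltr0n //.
have := sqr_mul_expR_le _ (ler0n R n); rewrite expr2.
set e := expR _; have := ltW c_gt0; nra.
Qed.

Let indic_exceed (a : 'I_n * 'I_n) t :
  \1_(exceed a) t = ((a.2%:R < z a.1 t ^+ 2)%R : bool)%:R :> R.
Proof.
rewrite indicE; case: (boolP (a.2%:R < z a.1 t ^+ 2)) => h; first by rewrite mem_set.
by rewrite memNset //=; apply/negP.
Qed.

Lemma sum_sqr_le_count t : (forall i, z i t ^+ 2 <= n%:R) ->
  \sum_i z i t ^+ 2 <= \sum_(a : 'I_n * 'I_n) (\1_(exceed a) t : R).
Proof.
move=> z_le; rewrite sum_pair; apply: ler_sum => i _.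
under eq_bigr do rewrite indic_exceed /=.
exact: le_sum_lt_nat (sqr_ge0 _) (z_le i).
Qed.

Lemma sum_sqr_le_of_count_dev t :
  (forall i, z i t ^+ 2 <= n%:R) ->
  `|\sum_(a : 'I_n * 'I_n) (\1_(exceed a) t : R) -
    \sum_(a : 'I_n * 'I_n) fine (P (exceed a))| < n%:R ->
  \sum_i z i t ^+ 2 <= (c * (1 - rho)^-1 + 1) * n%:R.
Proof.
move=> z_le dev_lt; apply: le_trans (sum_sqr_le_count _ z_le) _.
have := mean_exceed_le; have := ler_norm (\sum_(a : 'I_n * 'I_n) (\1_(exceed a) t : R) -
  \sum_(a : 'I_n * 'I_n) fine (P (exceed a))).
lra.
Qed.

Lemma sum_sqr_concentration : (0 < n)%N ->
  1 - c * (64 + (1 - rho)^-1 ^+ 2) / n%:R <=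
    fine (P [set t | \sum_i z i t ^+ 2 <= (c * (1 - rho)^-1 + 1) * n%:R]).
Proof.
move=> n_gt0; set N : R := n%:R; set g := (1 - rho)^-1.
have N_gt0 : 0 < N by rewrite ltr0n.
pose A (a : 'I_n * 'I_n) := exceed a.
have mA a : measurable (A a) by exact: measurable_exceed.
set M := \big[setU/set0]_i z i @^-1` [set x | N < x ^+ 2].
set D := [set t | N <= `|\sum_a \1_(A a) t - \sum_a fine (P (A a))|].
have PD : fine (P D) <= c * g ^+ 2 / N.
  apply: le_trans (count_deviation_le P mA _ N_gt0) _.
  rewrite ler_pdivrMr ?exprn_gt0 // (le_trans pair_sum_exceed_le) //.
  by rewrite -/N -/g (_ : _ / N * _ = N * (c * g ^+ 2)) //; field; rewrite gt_eqF.
have := prob_some_sqr_gt_le; rewrite -/N -/M => PM.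
rewrite mulrDr mulrDl; apply: le_trans (probability_setCU_ge P M D _ _ _ _ _) => //.
- by rewrite -!mulrA; lra.
- exact: bigsetU_measurable.
- exact: measurable_count_dev.
- exact: measurable_sum_sqr_le.
- move=> t /not_orP[notM notD]; apply: sum_sqr_le_of_count_dev.
    move=> i; rewrite leNgt; apply/negP => z_gt; apply: notM.
    by rewrite /M (bigD1 i) //=; left.
  by rewrite ltNge; apply/negP.
Qed.

End SumOfSquares.

Lemma std_gaussian_sqr_tail (R : realType) : exists2 c : R, 0 < c &
  forall d (T : measurableType d) (P : probability T R) (Y : T -> R) (s : R),
    std_gaussian_rv P Y -> fine (P (Y @^-1` [set x | s < x ^+ 2])) <= c * expR (- s / 4).
Proof.
have [c c_gt0 tail] := normal_prob_sqr_gt_le R.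
exists c => // d T P Y s [mY Y_law].
have mYs : measurable (Y @^-1` [set x | s < x ^+ 2]).
  by rewrite -[_ @^-1` _]setTI; exact: mY measurableT _ (measurable_sqr_gt s).
have := tail s; rewrite -Y_law; last exact: measurable_sqr_gt.
by move/fine_le; apply; rewrite ?fin_num_measure.
Qed.

Lemma cvg_probability_to1 {d} {T : nat -> measurableType d} {R : realType}
    (P : forall n, probability (T n) R) (A : forall n, set (T n)) (C : R) :
  (forall n, measurable (A n)) ->
  (\forall n \near \oo, 1 - C / n%:R <= fine (P n (A n))) ->
  (fun n => P n (A n)) @ \oo --> 1%E.
Proof.
move=> mA P_ge.
have P_fin n : P n (A n) \is a fin_num by exact: (fin_num_measure (P n) _ (mA n)).
apply: cvg_EFin; first exact: nearW.
have C_div_cvg : (fun n => C / n%:R) @ \oo --> (0 : R).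
  by rewrite -cvg_shiftS; have := cvgM (cvg_cst C) (@cvg_harmonic R); rewrite mulr0; apply.
apply: (@squeeze_cvgr _ _ _ _ (fun n => 1 - C / n%:R) (fun=> 1)).
- near=> n; rewrite /= (near P_ge n) //.
  by rewrite -lee_fin fineK // probability_le1.
- by rewrite -[X in _ --> X]subr0; exact: cvgB (cvg_cst _) C_div_cvg.
- exact: cvg_cst.
Unshelve. all: by end_near.
Qed.

Theorem lemma11 (R : realType) (delta sigma_max lam_min lam_max : R) :
  0 < delta -> 0 < lam_min -> lam_min <= lam_max ->
  exists K : R, 0 < K /\
  forall (d : measure_display) (T : nat -> measurableType d)
    (P : forall n, probability (T n) R)
    (p : nat -> nat) (beta : forall n, 'cV[R]_(p n))
    (sigma sigma_beta2 : R)
    (X : forall n, 'I_n -> 'I_(p n) -> T n -> R)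
    (z : forall n, 'I_n -> T n -> R),
    (fun n => (p n)%:R / n%:R) @ \oo --> delta ->
    (fun n => sqnorm (beta n)) @ \oo --> sigma_beta2 ->
    sigma_beta2 <= sigma_max ^+ 2 ->
    sigma ^+ 2 <= sigma_max ^+ 2 ->
    (forall n, mutually_independent (P n)
       (fun k : ('I_n * 'I_(p n)) + 'I_n =>
          match k with inl ij => X n ij.1 ij.2 | inr i => z n i end)) ->
    (forall n i j, std_gaussian_rv (P n) (X n i j)) ->
    (forall n i, std_gaussian_rv (P n) (z n i)) ->
    exists A : forall n, set (T n),
      (forall n, measurable (A n)) /\
      (forall n, A n `<=` [set w | lemma11_event
          (\matrix_(i, j) X n i j w) (\col_i z n i w) (beta n)
          sigma lam_min lam_max K]) /\
      (fun n => P n (A n)) @ \oo --> 1%E.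
Proof.
move=> _ lam_min_gt0 _.
have [c c_gt0 tail] := std_gaussian_sqr_tail R.
set g := (1 - expR (- 1 / 8) : R)^-1; set B := c * g + 1; set s := sigma_max ^+ 2.
have g_gt0 : 0 < g by rewrite invr_gt0 subr_gt0 expR_lt1; lra.
have B_ge0 : 0 <= B by rewrite addr_ge0 ?mulr_ge0 ?ltW.
have s_ge0 : 0 <= s := sqr_ge0 _.
exists (s + 1 + s * B / lam_min); split.
  have : 0 <= s * B / lam_min by apply: divr_ge0; [exact: mulr_ge0 | exact: ltW].
  lra.
(* Neither the aspect ratio nor the law of the design enters: the norm bound on
   the ridge estimates holds for every design matrix. *)
move=> d T P p beta sigma sb2 X z _ beta_cvg sb2_le sigma_le indep _ z_gauss.
have mz n i : measurable_fun setT (z n i) := (z_gauss n i).1.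
pose A n := if sqnorm (beta n) <= s + 1 then [set t | \sum_i z n i t ^+ 2 <= B * n%:R]
            else set0.
have mA n : measurable (A n) by rewrite /A; case: ifP => _ //; exact: measurable_sum_sqr_le.
exists A; split=> //; split.
  move=> n t; rewrite /A; case: ifP => // beta_le z_le.
  apply: lemma11_event_of_sqnorm_le => //.
  by rewrite /sqnorm; under eq_bigr do rewrite mxE.
apply: (cvg_probability_to1 _ _ (c * (64 + g ^+ 2)) mA).
have beta_le : \forall n \near \oo, sqnorm (beta n) <= s + 1.
  by apply: (cvgr_le _ beta_cvg); rewrite (le_lt_trans sb2_le) // ltrDl.
near=> n; rewrite /A (near beta_le n) //.
apply: (sum_sqr_concentration (P n) n (z n) c (mz n) c_gt0) => //.
- by move=> i x; exact: tail.
- exact: mutually_independent_inr (indep n).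
- by near: n; exact: nbhs_infty_gt.
Unshelve. all: by end_near.
Qed.
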